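(* For every even $m\ge4$ and every $i\in[1..f_m]$, the Fibonacci word satisfies $\mathsf{F}_m[i]=\mathtt{a}$ if $(1+i\cdot f_{m-2})\bmod f_m\le f_{m-1}$, and $\mathsf{F}_m[i]=\mathtt{b}$ otherwise.
   Context: Fibonacci words: $\mathsf{F}_1=\mathtt{b}$, $\mathsf{F}_2=\mathtt{a}$, $\mathsf{F}_m=\mathsf{F}_{m-1}\mathsf{F}_{m-2}$ (concatenation) for $m\ge3$; $f_m=|\mathsf{F}_m|$. Strings are indexed from 1. For integers $x$ and $n\ge1$, $x\bmod n$ denotes the representative of $x$ modulo $n$ in $[1..n]$ (so a multiple of $n$ maps to $n$). *)

From HB Require Import structures.
From mathcomp Require Import all_boot.
Set Implicit Arguments. Unset Strict Implicit. Unset Printing Implicit Defensive.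

Inductive letter := La | Lb.
Definition letter_eqb (x y : letter) : bool :=
  match x, y with La, La | Lb, Lb => true | _, _ => false end.
Lemma letter_eqP : Equality.axiom letter_eqb.
Proof. by case; case; constructor. Qed.
HB.instance Definition _ := hasDecEq.Build letter letter_eqP.

(* Fibonacci words: fibw 1 = b, fibw 2 = a, fibw m = fibw (m-1) ++ fibw (m-2).
   fibw 0 is an unused dummy (empty word). *)
Fixpoint fibw (m : nat) : seq letter :=
  match m with
  | 0 => [::]
  | 1 => [:: Lb]
  | 2 => [:: La]
  | (k.+1 as m1).+1 => fibw m1 ++ fibw k
  end.

Definition fibl (m : nat) : nat := size (fibw m).

(* 1-indexed access: w[i] for 1 <= i <= |w| *)
Definition at1 (w : seq letter) (i : nat) : letter := nth La w i.-1.

(* x mod n with representative in [1..n] (for natural x, n >= 1). *)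
Definition mod1 (x n : nat) : nat := ((x + n - 1) %% n).+1.

(* Fibonacci words are mechanical words (Christoffel-type characterisation).

   For slopes a/b define the lower mechanical letter [mechanical a b i], which is
   [Lb] exactly when the line y = a x / b meets a new integer ordinate between
   x = i and x = i + 1.  Writing n = f_m, p = f_(m-1), q = f_(m-2), we show
   that F_m[i] is the mechanical letter of slope q / n:
   - at every interior position 1 <= i <= n - 2, for every m; and
   - at the last two positions too when m is even (F_m then ends in "ba").
   The induction F_(m+1) = F_m F_(m-1) moves between the slopes q/n, p/N and
   f_(m-3)/p.  By Cassini's identity consecutive such slopes are Farey
   neighbours (|b c - a d| = 1), and no fraction with denominator smaller than
   b + d lies strictly between Farey neighbours a/b and c/d; hence the floors
   of a j / b and c j / d agree for small j, and both slopes produce the same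
   letters away from multiples of the denominators.  The two positions around
   the junction of F_m and F_(m-1) are computed directly from Cassini's identity.
   Finally the mechanical letter of slope q/n is Lb iff (q i mod n) >= n - q = p,
   which is the form of the statement. *)

From mathcomp Require Import all_boot zify.

Lemma fibw_rec m : fibw m.+3 = fibw m.+2 ++ fibw m.+1.
Proof. by []. Qed.

Lemma fibl_rec m : fibl m.+2 = fibl m.+1 + fibl m.
Proof. by case: m => [|m] //; rewrite /fibl fibw_rec size_cat. Qed.

Lemma fibl_gt0 m : 0 < m -> 0 < fibl m.
Proof. by elim: m => [|[|m] IH] // _; rewrite fibl_rec; have := IH isT; lia. Qed.

(* The recurrence in the subtractive form used by the statement. *)
Lemma fibl_split m : 1 < m -> fibl m = fibl (m - 1) + fibl (m - 2).
Proof. by case: m => [|[|k]] // _; rewrite fibl_rec !subSS !subn0. Qed.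

(* Cassini's identity, in the form comparing the slopes f_k / f_(k+2) and
   f_(k+1) / f_(k+3). *)
Lemma fibl_cross k :
  if odd k then fibl k * fibl k.+3 = fibl k.+2 * fibl k.+1 + 1
  else fibl k.+2 * fibl k.+1 = fibl k * fibl k.+3 + 1.
Proof.
elim: k => [//|k IH]; rewrite /= !fibl_rec in IH *.
by case: (odd k) IH => /= IH; nia.
Qed.

Definition fib_tail (b : bool) : seq letter := if b then [:: La; Lb] else [:: Lb; La].

Lemma fibw_tail m : 3 <= m -> exists u, fibw m = u ++ fib_tail (odd m).
Proof.
suff tails k : (exists u, fibw k.+3 = u ++ fib_tail (odd k.+3)) /\
               (exists u, fibw k.+4 = u ++ fib_tail (odd k.+4)).
  by case: m => [|[|[|k]]] // _; case: (tails k).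
elim: k => [|k [[u Hu] [v Hv]]]; first by split; [exists [::] | exists [:: La]].
split; first by exists v.
by exists (fibw k.+4 ++ u); rewrite fibw_rec Hu catA /= !negbK.
Qed.

Lemma at1_catl s1 s2 i : 0 < i <= size s1 -> at1 (s1 ++ s2) i = at1 s1 i.
Proof. by move=> hi; rewrite /at1 nth_cat ifT //; lia. Qed.

Lemma at1_catr s1 s2 j : 0 < j -> at1 (s1 ++ s2) (size s1 + j) = at1 s2 j.
Proof. by move=> hj; rewrite /at1 nth_cat ifF; [congr nth; lia | lia]. Qed.

Lemma at1_cat_pair u x y w :
  at1 (u ++ [:: x, y & w]) (size u).+1 = x /\ at1 (u ++ [:: x, y & w]) (size u).+2 = y.
Proof. by split; rewrite /at1 nth_cat ?ltnn ?subnn // ltnNge leqnSn subSnn. Qed.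

Lemma divn_between x d k : k * d <= x < k.+1 * d -> x %/ d = k.
Proof.
move=> hx; have d0 : 0 < d.
  by case: d hx => [|d] //; rewrite !muln0.
by apply/eqP; rewrite eqn_leq leq_divRL // -ltnS ltn_divLR // andbC.
Qed.

Lemma not_dvdn_between b k j : k * b < j < k.+1 * b -> ~~ (b %| j).
Proof.
move=> hj; apply/negP => /dvdnP [t jt]; rewrite {}jt in hj.
have b0 : 0 < b by case: b hj => [|b] //; rewrite !muln0.
by rewrite !ltn_pmul2r // in hj; lia.
Qed.

Definition farey_neighbours (a b c d : nat) : Prop := b * c = a * d + 1 \/ a * d = b * c + 1.

(* If a/b < c/d are Farey neighbours and 0 < j < b + d, then no k/j lies
   strictly between them, so a j / b and c j / d have the same floor unless
   c j / d is an integer, i.e. unless d divides j. *)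
Lemma farey_floor_lt a b c d j : b * c = a * d + 1 -> 0 < j < b + d -> ~~ (d %| j) ->
  (a * j) %/ b = (c * j) %/ d.
Proof.
move=> cross hj ndj.
have b0 : 0 < b by nia.
have d0 : 0 < d.
  case: (posnP d) => // d0; move: cross; rewrite d0 muln0 add0n => /eqP.
  by rewrite muln_eq1 => /andP [/eqP b1 _]; lia.
have scaled : b * (c * j) = d * (a * j) + j.
  by rewrite mulnA cross mulnDl mul1n [a * d]mulnC -mulnA.
have inexact : 0 < (c * j) %% d.
  rewrite lt0n; apply: contra ndj => /eqP r0.
  have : d %| b * (c * j) by rewrite dvdn_mull // /dvdn r0.
  by rewrite scaled dvdn_addr // dvdn_mulr.
have eaj := divn_eq (a * j) b; have rlt := ltn_pmod (a * j) b0.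
have ecj := divn_eq (c * j) d; have tlt := ltn_pmod (c * j) d0.
set k := (a * j) %/ b in eaj *; set r := (a * j) %% b in eaj rlt.
set l := (c * j) %/ d in ecj *; set t := (c * j) %% d in ecj tlt inexact.
case: (ltngtP k l) => [kl|lk|//]; exfalso.
- have : k.+1 * d <= l * d by rewrite leq_pmul2r.
  nia.
- have : l.+1 * d * b <= k * b * d by rewrite mulnAC leq_pmul2r // leq_pmul2r.
  nia.
Qed.

Definition jump (a b i : nat) : bool := (a * i) %/ b < (a * i.+1) %/ b.
Definition mechanical (a b i : nat) : letter := if jump a b i then Lb else La.

Lemma jump_mod a b i : a < b -> jump a b i = (b - a <= (a * i) %% b).
Proof.
move=> ab; rewrite /jump mulnS addnC divnD; last by lia.
rewrite (divn_small ab) (modn_small ab) addn0 -[X in X < _]addn0 ltn_add2l.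
by rewrite lt0b leq_subLR addnC.
Qed.

(* Near the denominator b of a Farey neighbour a/b of c/d, the floors of c x / d
   are determined by the cross product: these two lemmas give the letters of
   slope c/d at positions b - 1 and b, according to the sign of b c - a d. *)
Lemma jump_below_crossing a b c d : b * c = a * d + 1 -> 1 < c -> c.+1 < d ->
  jump c d b.-1 /\ ~~ jump c d b.
Proof.
rewrite mulnC => cross c1 cd; have b0 : 0 < b by nia.
have a0 : 0 < a by nia.
have floor_prev : (c * b.-1) %/ d = a.-1.
  by apply: divn_between; rewrite prednK // -!subn1 mulnBr mulnBl !muln1 !mul1n; lia.
have floor_at : (c * b) %/ d = a by apply: divn_between; rewrite mulSn; lia.
have floor_next : (c * b.+1) %/ d = a by apply: divn_between; rewrite mulSn mulnS; lia.
by rewrite /jump prednK // floor_prev floor_at floor_next; lia.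
Qed.

Lemma jump_above_crossing a b c d : a * d = b * c + 1 -> 0 < c -> c.+1 < d ->
  ~~ jump c d b.-1 /\ jump c d b.
Proof.
rewrite [b * c]mulnC => cross c0 cd; have a0 : 0 < a by nia.
have b0 : 0 < b by case: (posnP b) cross => [->|//]; rewrite muln0; nia.
have floor_prev : (c * b.-1) %/ d = a.-1.
  by apply: divn_between; rewrite prednK // -!subn1 mulnBr mulnBl !muln1 !mul1n; lia.
have floor_at : (c * b) %/ d = a.-1.
  by apply: divn_between; rewrite prednK // -subn1 mulnBl mul1n; lia.
have floor_next : (c * b.+1) %/ d = a by apply: divn_between; rewrite mulSn mulnS; lia.
by rewrite /jump prednK // floor_prev floor_at floor_next; lia.
Qed.

Lemma farey_floor a b c d j : farey_neighbours a b c d -> 0 < j < b + d ->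
  ~~ (b %| j) -> ~~ (d %| j) -> (a * j) %/ b = (c * j) %/ d.
Proof.
rewrite /farey_neighbours => -[cross|cross] hj nbj ndj; first exact: farey_floor_lt.
symmetry; apply: farey_floor_lt => //; first by rewrite mulnC cross mulnC.
by rewrite addnC.
Qed.

Lemma mechanical_farey a b c d i : farey_neighbours a b c d -> 0 < i -> i.+1 < b + d ->
  ~~ (b %| i) -> ~~ (b %| i.+1) -> ~~ (d %| i) -> ~~ (d %| i.+1) ->
  mechanical a b i = mechanical c d i.
Proof.
move=> nb i0 ibd nbi nbi1 ndi ndi1.
by rewrite /mechanical /jump !(@farey_floor a b c d) //; lia.
Qed.

Lemma mechanical_shift a b j : 0 < b -> mechanical a b (b + j) = mechanical a b j.
Proof. by move=> b0; rewrite /mechanical /jump -addnS !mulnDr !divnMDl // ltn_add2l. Qed.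

Lemma fibl_neighbours k : farey_neighbours (fibl k) (fibl k.+2) (fibl k.+1) (fibl k.+3).
Proof. by rewrite /farey_neighbours; have := fibl_cross k; case: odd => ->; [right | left]. Qed.

(* The inductive step F_(k+4) = F_(k+3) F_(k+2): with the lengths named below,
   the slope p/N of F_(k+4) is compared with the slopes q/n and s/p of its
   two factors. *)
Section FibonacciStep.
Variable k : nat.
Let s := fibl k.
Let q := fibl k.+1.
Let p := fibl k.+2.
Let n := fibl k.+3.
Let N := fibl k.+4.

Lemma fibl_step_facts : [/\ N = n + p, n = p + q, p = q + s, 0 < q & 0 < p].
Proof. by split; first [exact: fibl_rec | exact: fibl_gt0]. Qed.

Lemma mechanical_prefix i : 0 < i -> i.+1 < n ->
  mechanical p N i = mechanical q n i.
Proof.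
have [EN En _ _ _] := fibl_step_facts => i0 hi.
by symmetry; apply: mechanical_farey (fibl_neighbours k.+1) _ _ _ _ _ _;
  first [lia | apply: (@not_dvdn_between _ 0); lia].
Qed.

(* On the second factor, slope p/N at n + j agrees with slope s/p at j: pass to
   q/n, use n-periodicity, then pass to s/p. *)
Lemma mechanical_suffix j : 0 < j -> j.+1 < p ->
  mechanical p N (n + j) = mechanical s p j.
Proof.
have [EN En Ep q0 p0] := fibl_step_facts => j0 hj.
transitivity (mechanical q n (n + j)).
  symmetry; apply: mechanical_farey (fibl_neighbours k.+1) _ _ _ _ _ _;
    first [lia | apply: (@not_dvdn_between _ 0); lia | apply: (@not_dvdn_between _ 1); lia].
rewrite mechanical_shift; last lia.
by symmetry; apply: mechanical_farey (fibl_neighbours k) _ _ _ _ _ _;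
  first [lia | apply: (@not_dvdn_between _ 0); lia].
Qed.

Lemma mechanical_boundary :
  [:: mechanical p N n.-1; mechanical p N n] = fib_tail (odd k.+3).
Proof.
have [EN En Ep q0 p0] := fibl_step_facts.
have s0 : odd k -> 0 < s by move=> ok; apply: fibl_gt0; case: k ok.
have := fibl_cross k.+1; rewrite /= !negbK /mechanical.
have pN : p.+1 < N by lia.
case: (odd k) s0 => /= s0 cross.
- have p1 : 1 < p by have := s0 isT; lia.
  have [jump_prev /negbTE jump_at] := @jump_below_crossing q n p N cross p1 pN.
  by rewrite jump_prev jump_at.
- have [/negbTE jump_prev jump_at] := @jump_above_crossing q n p N cross p0 pN.
  by rewrite jump_prev jump_at.
Qed.

End FibonacciStep.

Lemma fibw_interior m i : 0 < i -> i.+1 < fibl m ->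
  at1 (fibw m) i = mechanical (fibl (m - 2)) (fibl m) i.
Proof.
move: i; elim/ltn_ind: m => -[|[|[|[|k]]]] IH i i0 hi; try by move: hi; rewrite /fibl /=; lia.
have [EN En _ _ _] := fibl_step_facts k.
have [u Fn] := fibw_tail k.+3 isT.
have size_u : fibl k.+3 = (size u).+2 by rewrite /fibl Fn size_cat; case: (odd k.+3); rewrite addn2.
rewrite fibw_rec (_ : k.+4 - 2 = k.+2) //.
have [prefix|[at_prev|[at_n|suffix]]] :
  i.+1 < fibl k.+3 \/ i = (fibl k.+3).-1 \/ i = fibl k.+3 \/ fibl k.+3 < i by lia.
- rewrite at1_catl -/(fibl k.+3) ?IH ?mechanical_prefix //; lia.
- rewrite Fn -(mechanical_boundary k) -catA at_prev size_u.
  exact: (at1_cat_pair _ _ _ _).1.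
- rewrite Fn -(mechanical_boundary k) -catA at_n size_u.
  exact: (at1_cat_pair _ _ _ _).2.
- have [j Ej j0] : exists2 j, i = fibl k.+3 + j & 0 < j by exists (i - fibl k.+3); lia.
  rewrite Ej in hi *.
  rewrite {1}/fibl at1_catr // IH ?mechanical_suffix ?subSS ?subn0 //; lia.
Qed.

Lemma mechanical_end a b : 0 < a < b ->
  mechanical a b b.-1 = Lb /\ mechanical a b b = La.
Proof.
move=> /andP[a0 ab]; rewrite /mechanical !jump_mod //.
have ba : b <= a * b by rewrite leq_pmull.
have -> : a * b.-1 = a.-1 * b + (b - a) by rewrite -!subn1 mulnBr mulnBl !muln1 !mul1n; lia.
rewrite modnMDl modnMl modn_small ?leqnn; last lia.
by rewrite leqn0 subn_eq0 leqNgt ab.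
Qed.

Lemma fibw_even m i : 4 <= m -> ~~ odd m -> 0 < i <= fibl m ->
  at1 (fibw m) i = mechanical (fibl (m - 2)) (fibl m) i.
Proof.
move=> m4 even_m /andP[i0 hi].
have [u Fm] := fibw_tail m (ltnW m4); rewrite (negbTE even_m) in Fm.
have size_u : fibl m = (size u).+2 by rewrite /fibl Fm size_cat addn2.
have slope : 0 < fibl (m - 2) < fibl m.
  by have := @fibl_split m (ltnW (ltnW m4)); have := @fibl_gt0 (m - 1); have := @fibl_gt0 (m - 2); lia.
have [end_prev end_at] := @mechanical_end _ _ slope.
have [|[->|->]] : i.+1 < fibl m \/ i = (fibl m).-1 \/ i = fibl m by lia.
- exact: fibw_interior.
- by rewrite end_prev Fm size_u; exact: (at1_cat_pair _ _ _ [::]).1.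
- by rewrite end_at Fm size_u; exact: (at1_cat_pair _ _ _ [::]).2.
Qed.

Lemma mod1_succ x n : 0 < n -> mod1 x.+1 n = (x %% n).+1.
Proof. by move=> n0; rewrite /mod1 addSn subn1 /= modnDr. Qed.

Theorem mainTheorem16 (m i : nat) :
  4 <= m -> ~~ odd m -> 1 <= i <= fibl m ->
  at1 (fibw m) i =
    (if mod1 (1 + i * fibl (m - 2)) (fibl m) <= fibl (m - 1) then La else Lb).
Proof.
move=> m4 even_m hi.
have split_m := @fibl_split m (ltnW (ltnW m4)).
have q0 : 0 < fibl (m - 2) by apply: fibl_gt0; lia.
have p0 : 0 < fibl (m - 1) by apply: fibl_gt0; lia.
rewrite fibw_even // /mechanical jump_mod; last by lia.
rewrite add1n mulnC mod1_succ; last by lia.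
by rewrite {1}split_m addnK; case: leqP.
Qed.
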